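(* Let $r>1$ and integers $N,K\ge1$. Let $\gamma(r,K,N)$ be the supremum of $$\frac{p^K}{z^K}\sum_{i=1}^{K-1}\frac{z^i}{\sum_{j=i}^Kp^j}$$ over all $p=(p^1,\dots,p^K)$ with $rp^K\ge1$, $\sum_{i=1}^Kp^i=1$, $p^i>0$ for all $i$, where $z^i=(\sum_{j=1}^ip^j)^N-(\sum_{j=1}^{i-1}p^j)^N$. Then $\eta(r,K,N)=\gamma(r,K,N)/(1+\gamma(r,K,N))$.
   Context: Single item auction with $N$ buyers whose values are i.i.d., each taking values $0<x^1<\dots<x^K$ with probabilities $p^i>0$, $\sum_ip^i=1$. With $z^i$ as in the claim and reserve index $t(x,p)=\max\{i: i\in\arg\max_{1\le k\le K}x^k\sum_{j=k}^Kp^j\}$, the efficiency loss ratio of the welfare-maximizing revenue-optimal auction is $\mathrm{ELR}_N(x,p)=\sum_{i=1}^{t(x,p)-1}z^ix^i/\sum_{i=1}^Kz^ix^i$. $\eta(r,K,N)$ is the supremum of $\mathrm{ELR}_N(x,p)$ over all such $p$ and all $x$ with $0<x^1<\dots<x^K\le rx^1$. *)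

From HB Require Import structures.
From mathcomp Require Import all_boot all_order all_algebra.
From mathcomp Require Import boolp classical_sets reals.
Set Implicit Arguments. Unset Strict Implicit. Unset Printing Implicit Defensive.
Import Order.TTheory GRing.Theory Num.Theory.
Local Open Scope ring_scope.
Local Open Scope classical_set_scope.

(* Vectors x = (x^1..x^K), p = (p^1..p^K) are functions nat -> R;
   only indices 1..K are used. *)

Section Auction.
Variable R : realType.

Definition cumP (p : nat -> R) (i : nat) : R := \sum_(1 <= j < i.+1) p j.

Definition tailP (p : nat -> R) (K k : nat) : R := \sum_(k <= j < K.+1) p j.

Definition zz (N : nat) (p : nat -> R) (i : nat) : R :=
  cumP p i ^+ N - cumP p i.-1 ^+ N.

Definition is_prob (K : nat) (p : nat -> R) : Prop :=
  (forall i, (1 <= i <= K)%N -> 0 < p i) /\ \sum_(1 <= i < K.+1) p i = 1.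

Definition is_support (r : R) (K : nat) (x : nat -> R) : Prop :=
  0 < x 1%N /\ (forall i, (1 <= i < K)%N -> x i < x i.+1) /\ x K <= r * x 1%N.

Definition reserve_idx (K : nat) (x p : nat -> R) : nat :=
  \max_(1 <= i < K.+1 |
     all (fun k => (x k * tailP p K k <= x i * tailP p K i)%R) (index_iota 1 K.+1)) i.

Definition ELR (K N : nat) (x p : nat -> R) : R :=
  (\sum_(1 <= i < reserve_idx K x p) zz N p i * x i) /
  (\sum_(1 <= i < K.+1) zz N p i * x i).

Definition eta_ELR (r : R) (K N : nat) : R :=
  sup [set e | exists x p, is_prob K p /\ is_support r K x /\ e = ELR K N x p].

Definition gamma_obj (K N : nat) (p : nat -> R) : R :=
  p K / zz N p K * \sum_(1 <= i < K) zz N p i / tailP p K i.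

Definition gamma_sup (r : R) (K N : nat) : R :=
  sup [set g | exists p, is_prob K p /\ 1 <= r * p K /\ g = gamma_obj K N p].

End Auction.

From HB Require Import structures.
From mathcomp Require Import all_boot all_order all_algebra.
From mathcomp Require Import boolp classical_sets reals.
From mathcomp Require Import ring lra zify.
Set Implicit Arguments. Unset Strict Implicit. Unset Printing Implicit Defensive.
Import Order.TTheory GRing.Theory Num.Theory.
Local Open Scope ring_scope.
Local Open Scope classical_set_scope.

(* Write T_k for the tail mass sum_{j>=k} p^j, C_k for the cumulative mass and
   S_t = sum_{i<t} z^i / T_i.
   Lower bound: for feasible p the support x^k = 1/T_k makes every price equally
   profitable, so the reserve index is K and ELR = gamma/(1+gamma).
   Upper bound: let t be the reserve index of (x, p).  Optimality of t gives
   x^i T_i <= x^t T_t, hence the welfare lost below t is at most x^t T_t S_t; comparing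
   with k = 1 and using x^t <= r x^1 gives r T_t >= 1; monotonicity of x bounds the
   welfare kept from below by x^t (1 - C_{t-1}^N).  Finally T_t S_t / (1 - C_{t-1}^N) is
   at most the gamma-objective of the feasible vector obtained from p by moving the
   tail mass T_t to position K and spreading p^{t-1} evenly over positions t-1..K-1,
   which keeps C_{K-1} = C_{t-1} and the tail T_{t-1}. *)

Section AuctionBounds.
Variable R : realType.
Implicit Types (p x : nat -> R) (r : R).

Lemma cumP0 p : cumP p 0 = 0.
Proof. by rewrite /cumP big_geq. Qed.

Lemma cumPS p i : cumP p i.+1 = cumP p i + p i.+1.
Proof. by rewrite /cumP big_nat_recr. Qed.

Lemma cumP_cat p i j : (i <= j)%N -> cumP p j = cumP p i + \sum_(i.+1 <= k < j.+1) p k.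
Proof. by move=> ij; rewrite /cumP (big_cat_nat _ (n := i.+1)). Qed.

Lemma tailP_cumP p K j : (1 <= j <= K.+1)%N -> tailP p K j = cumP p K - cumP p j.-1.
Proof.
by case: j => // j /andP[_]; rewrite ltnS => jK; rewrite (cumP_cat p jK) /tailP; ring.
Qed.

Lemma cumP_eq1_gt0 p K : cumP p K = 1 -> (0 < K)%N.
Proof. by case: K => //; rewrite cumP0 => /esym/eqP; rewrite oner_eq0. Qed.

Lemma tailPK p K : tailP p K K = p K.
Proof. by rewrite /tailP big_nat1. Qed.

Lemma sum_zz N p a b : (a <= b)%N ->
  \sum_(a <= k < b) zz N p k = cumP p b.-1 ^+ N - cumP p a.-1 ^+ N.
Proof. by move=> ab; apply: (telescope_sumr_eq (fun j => cumP p j.-1 ^+ N)). Qed.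

Section NonnegWeights.
Variables (K : nat) (p : nat -> R).
Hypothesis p_ge0 : forall i, (1 <= i <= K)%N -> 0 <= p i.

Lemma cumP_ge0 i : (i <= K)%N -> 0 <= cumP p i.
Proof. by move=> iK; rewrite /cumP big_nat sumr_ge0 // => k ?; apply: p_ge0; lia. Qed.

Lemma cumP_le i j : (i <= j <= K)%N -> cumP p i <= cumP p j.
Proof.
move=> /andP[ij jK]; rewrite (cumP_cat p ij) lerDl big_nat sumr_ge0 // => k ?.
by apply: p_ge0; lia.
Qed.

Lemma zz_ge0 N i : (i <= K)%N -> 0 <= zz N p i.
Proof.
move=> iK; rewrite /zz subr_ge0 lerXn2r ?nnegrE ?cumP_ge0 ?cumP_le //; lia.
Qed.

Lemma tailP_le j k : (1 <= j)%N -> (j <= k <= K.+1)%N -> tailP p K k <= tailP p K j.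
Proof.
move=> j1 /andP[jk kK]; rewrite /tailP (big_cat_nat (n := k) jk kK) /= lerDr.
by rewrite big_nat sumr_ge0 // => i ?; apply: p_ge0; lia.
Qed.

Lemma tailP_ge_pK j : (1 <= j <= K)%N -> p K <= tailP p K j.
Proof. by move=> /andP[j1 jK]; rewrite -tailPK; apply: tailP_le; lia. Qed.

End NonnegWeights.

Section PosWeights.
Variables (K : nat) (p : nat -> R).
Hypothesis p_gt0 : forall i, (1 <= i <= K)%N -> 0 < p i.

Let p_ge0 i : (1 <= i <= K)%N -> 0 <= p i.
Proof. by move/p_gt0/ltW. Qed.

Lemma tailP_gt0 j : (1 <= j <= K)%N -> 0 < tailP p K j.
Proof. by move=> jK; apply: lt_le_trans (tailP_ge_pK p_ge0 jK); apply: p_gt0; lia. Qed.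

Lemma zz_gt0 N i : (1 <= N)%N -> (1 <= i <= K)%N -> 0 < zz N p i.
Proof.
move=> N1 /andP[i1 iK]; have c_ge0 := cumP_ge0 p_ge0.
rewrite /zz subr_gt0 ltrXn2r ?nnegrE ?c_ge0; try lia.
case: i i1 iK => // i _ iK /=; rewrite cumPS ltrDl p_gt0 //; lia.
Qed.

Section ProbWeights.
Hypothesis p_sum1 : cumP p K = 1.

Let K_gt0 : (0 < K)%N := cumP_eq1_gt0 p_sum1.

Lemma pK_gt0 : 0 < p K.
Proof. by apply: p_gt0; rewrite K_gt0 leqnn. Qed.

Lemma cumP_le1 i : (i <= K)%N -> cumP p i <= 1.
Proof. by move=> iK; rewrite -p_sum1; apply: (cumP_le p_ge0); rewrite iK leqnn. Qed.

Lemma cumP_pred : cumP p K.-1 = 1 - p K.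
Proof. by move: p_sum1; case: (K) K_gt0 => // k _; rewrite cumPS /= => <-; ring. Qed.

Lemma cumP_lt1 i : (i < K)%N -> cumP p i < 1.
Proof.
move=> iK; apply: le_lt_trans (cumP_le p_ge0 (i := i) (j := K.-1) _) _; first lia.
by rewrite cumP_pred ltrBlDr ltrDl pK_gt0.
Qed.

Lemma pK_le_zz_last N : (1 <= N)%N -> p K <= zz N p K.
Proof.
move=> N1; rewrite /zz p_sum1 expr1n cumP_pred.
have q_ge0 : 0 <= 1 - p K by rewrite -cumP_pred (cumP_ge0 p_ge0) // leq_pred.
have : (1 - p K) ^+ N <= 1 - p K by rewrite ler_iXnr // lerBlDr lerDl ltW ?pK_gt0.
lra.
Qed.

End ProbWeights.
End PosWeights.

Lemma support_le r K x : is_support r K x ->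
  forall i j, (1 <= i <= j)%N -> (j <= K)%N -> x i <= x j.
Proof.
move=> [_ [x_lt _]] i; elim=> [|j IH] /andP[i1 ij] jK; first lia.
have [<-|ij'] := eqVneq i j.+1; first by [].
by apply: le_trans (IH _ _) (ltW (x_lt _ _)); lia.
Qed.

Lemma support_gt0 r K x : is_support r K x -> forall j, (1 <= j <= K)%N -> 0 < x j.
Proof.
move=> xs j /andP[j1 jK]; apply: lt_le_trans xs.1 (support_le xs _ jK); lia.
Qed.

Lemma bigmax_seq_mem (s : seq nat) (P : pred nat) :
  \max_(i <- s | P i) i != 0%N ->
  P (\max_(i <- s | P i) i) && (\max_(i <- s | P i) i \in s).
Proof.
rewrite big_seq_cond; elim/big_ind: _ => [|a b IHa IHb|i]; rewrite ?eqxx //.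
  by rewrite /maxn; case: ifP.
by rewrite andbC => ->.
Qed.

Lemma exists_argmax (f : nat -> R) n : (1 <= n)%N ->
  exists2 i, (1 <= i <= n)%N & forall k, (1 <= k <= n)%N -> f k <= f i.
Proof.
elim: n => // -[_ _|n IH _]; first by exists 1%N => // k kk; have -> : k = 1%N by lia.
have [i i_n i_max] := IH isT.
have [fi|fn] := leP (f n.+2) (f i).
  exists i => [|k kk]; first lia.
  by have [->//|kn] := eqVneq k n.+2; apply: i_max; lia.
exists n.+2 => [|k kk]; first lia.
have [->//|kn] := eqVneq k n.+2.
by apply: le_trans (i_max _ _) (ltW fn); lia.
Qed.

Lemma reserve_idx_spec K x p : (1 <= K)%N ->
  let t := reserve_idx K x p in
  (1 <= t <= K)%N /\ forall k, (1 <= k <= K)%N -> x k * tailP p K k <= x t * tailP p K t.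
Proof.
move=> K1 t; have [i i_K i_max] := exists_argmax (fun k => x k * tailP p K k) K1.
have i_t : (i <= t)%N.
  apply: leq_bigmax_seq; first by rewrite mem_index_iota; lia.
  by apply/allP => k; rewrite mem_index_iota => kK; apply: i_max; lia.
have t_neq0 : t != 0%N by rewrite -lt0n; case/andP: i_K => i1 _; exact: leq_trans i1 i_t.
have /andP[/allP t_max] := bigmax_seq_mem t_neq0.
rewrite -/(reserve_idx K x p) -/t mem_index_iota => tK.
by split => [|k kK]; [lia | apply: t_max; rewrite mem_index_iota; lia].
Qed.

Lemma reserve_idx_last K x p : (1 <= K)%N ->
  (forall k, (1 <= k <= K)%N -> x k * tailP p K k <= x K * tailP p K K) ->
  reserve_idx K x p = K.
Proof.
move=> K1 K_max; apply/eqP; rewrite eqn_leq; apply/andP; split.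
  by apply/bigmax_leqP_seq => i; rewrite mem_index_iota; lia.
apply: leq_bigmax_seq; first by rewrite mem_index_iota; lia.
by apply/allP => k; rewrite mem_index_iota => kK; apply: K_max; lia.
Qed.

Section Gamma.
Variables (r : R) (K N : nat) (p : nat -> R).
Hypothesis p_gt0 : forall i, (1 <= i <= K)%N -> 0 < p i.
Hypothesis p_sum1 : cumP p K = 1.

Let p_ge0 i : (1 <= i <= K)%N -> 0 <= p i.
Proof. by move/p_gt0/ltW. Qed.

Let zz_last_gt0 : (1 <= N)%N -> 0 < zz N p K.
Proof.
by move=> N_gt0; apply: (zz_gt0 p_gt0) => //; rewrite (cumP_eq1_gt0 p_sum1) leqnn.
Qed.

Lemma gamma_sum_ge0 : 0 <= \sum_(1 <= i < K) zz N p i / tailP p K i.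
Proof.
rewrite big_nat sumr_ge0 // => i iK.
by rewrite divr_ge0 ?(zz_ge0 p_ge0) ?ltW ?(tailP_gt0 p_gt0); lia.
Qed.

Lemma gamma_obj_ge0 : (1 <= N)%N -> 0 <= gamma_obj K N p.
Proof.
move=> N_gt0; rewrite mulr_ge0 ?gamma_sum_ge0 // divr_ge0 ?ltW ?zz_last_gt0 //.
exact: pK_gt0 p_gt0 p_sum1.
Qed.

Lemma gamma_obj_le : (1 <= N)%N -> 1 <= r * p K -> gamma_obj K N p <= r.
Proof.
move=> N_gt0 rpK; have r_gt0 : 0 < r.
  by rewrite -(pmulr_lgt0 r (pK_gt0 p_gt0 p_sum1)) (lt_le_trans ltr01 rpK).
have pK_gt0 := pK_gt0 p_gt0 p_sum1; have zK_gt0 := zz_last_gt0 N_gt0.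
rewrite /gamma_obj -[r]mul1r ler_pM ?gamma_sum_ge0 ?divr_ge0 ?(ltW pK_gt0) ?(ltW zK_gt0) //.
  by rewrite ler_pdivrMr // mul1r (pK_le_zz_last p_gt0 p_sum1).
apply: le_trans (ler_sum_nat (G := fun i => r * zz N p i) _) _ => [i iK|].
  have T_gt0 : 0 < tailP p K i by apply: (tailP_gt0 p_gt0); lia.
  have z_ge0 : 0 <= zz N p i by apply: (zz_ge0 p_ge0); lia.
  rewrite ler_pdivrMr // mulrAC ler_peMl //.
  by apply: le_trans rpK _; rewrite ler_pM2l // (tailP_ge_pK p_ge0); lia.
rewrite -mulr_sumr sum_zz ?(cumP_eq1_gt0 p_sum1) //= cumP0 expr0n /=.
rewrite -[leRHS]mulr1 ler_pM2l //.
case: N N_gt0 => // n _; rewrite subr0 exprn_ile1 ?(cumP_ge0 p_ge0) ?leq_pred //.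
exact: (cumP_le1 p_gt0 p_sum1 (leq_pred K)).
Qed.

End Gamma.

Definition inv_tail p K k : R := (tailP p K k)^-1.

Section InvTail.
Variables (r : R) (K N : nat) (p : nat -> R).
Hypothesis p_gt0 : forall i, (1 <= i <= K)%N -> 0 < p i.
Hypothesis p_sum1 : cumP p K = 1.

Let K_gt0 : (0 < K)%N := cumP_eq1_gt0 p_sum1.
Let pK_gt0 : 0 < p K := pK_gt0 p_gt0 p_sum1.

Lemma inv_tail_support : 1 <= r * p K -> is_support r K (inv_tail p K).
Proof.
move=> rpK; rewrite /is_support /inv_tail [tailP p K 1]p_sum1 invr1 ltr01 mulr1 tailPK.
split=> //; split=> [i /andP[i1 iK]|]; last by rewrite -[_^-1]mul1r ler_pdivrMr.
rewrite ltf_pV2 ?posrE ?(tailP_gt0 p_gt0) ?i1 ?(ltnW iK) //; try lia.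
by rewrite [in X in _ < X]/tailP big_ltn ?ltrDr ?p_gt0 ?i1 ?(ltnW iK) //; lia.
Qed.

Lemma reserve_idx_inv_tail : reserve_idx K (inv_tail p K) p = K.
Proof.
have T_neq0 j : (1 <= j <= K)%N -> tailP p K j != 0.
  by move=> jK; rewrite lt0r_neq0 // (tailP_gt0 p_gt0).
by apply: reserve_idx_last => // k kK; rewrite /inv_tail !mulVf ?T_neq0 ?K_gt0 ?leqnn.
Qed.

Lemma ELR_inv_tail : (1 <= N)%N ->
  ELR K N (inv_tail p K) p = gamma_obj K N p / (1 + gamma_obj K N p).
Proof.
move=> N_gt0; rewrite /ELR reserve_idx_inv_tail big_nat_recr //= /gamma_obj /inv_tail tailPK.
have S_ge0 := gamma_sum_ge0 N p_gt0 p_sum1.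
have zK_gt0 : 0 < zz N p K by apply: (zz_gt0 p_gt0); rewrite ?K_gt0 ?leqnn.
set S := \sum_(1 <= i < K) _ in S_ge0 *.
have den_gt0 : 0 < zz N p K + p K * S by rewrite ltr_wpDr // mulr_ge0 // ltW.
by field; rewrite !lt0r_neq0.
Qed.

End InvTail.

Definition collapse p K t j : R :=
  if (j < t.-1)%N then p j
  else if (j < K)%N then p t.-1 / (K - t.-1)%:R
  else tailP p K t.

Section Collapse.
Variables (K N t : nat) (p : nat -> R).
Hypothesis p_gt0 : forall i, (1 <= i <= K)%N -> 0 < p i.
Hypothesis p_sum1 : cumP p K = 1.
Hypothesis t_ge2 : (2 <= t)%N.
Hypothesis t_le : (t <= K)%N.

Let pc := collapse p K t.

Lemma collapse_cumP_lo j : (j < t.-1)%N -> cumP pc j = cumP p j.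
Proof. by move=> jt; apply: eq_big_nat => k kj; rewrite /pc /collapse ifT //; lia. Qed.

Lemma collapse_cumP_pred : cumP pc K.-1 = cumP p t.-1.
Proof.
have t1 : t.-1 = t.-2.+1 by lia.
rewrite (cumP_cat _ (i := t.-2)) ?collapse_cumP_lo; try lia.
rewrite (eq_big_nat _ _ (F2 := fun _ => p t.-1 / (K - t.-1)%:R)) => [|k kK]; last first.
  by rewrite /pc /collapse ifF ?ifT //; lia.
rewrite sumr_const_nat -t1 prednK; last lia.
rewrite -[_ *+ _]mulr_natr divfK ?pnatr_eq0; last lia.
by rewrite t1 cumPS.
Qed.

Lemma collapse_last : pc K = tailP p K t.
Proof. by rewrite /pc /collapse ifF ?ltnn //; lia. Qed.

Lemma collapse_sum1 : cumP pc K = 1.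
Proof.
have K_gt0 := cumP_eq1_gt0 p_sum1.
rewrite -{1}(prednK K_gt0) cumPS prednK // collapse_cumP_pred collapse_last.
by rewrite tailP_cumP ?p_sum1 1?addrC ?subrK //; lia.
Qed.

Lemma collapse_gt0 i : (1 <= i <= K)%N -> 0 < pc i.
Proof.
move=> iK; rewrite /pc /collapse; case: ifP => [_|_]; first by apply: p_gt0; lia.
case: ifP => _; last by apply: (tailP_gt0 p_gt0); lia.
by rewrite divr_gt0 ?ltr0n ?p_gt0 //; lia.
Qed.

Lemma collapse_tailP_lo j : (1 <= j <= t.-1)%N -> tailP pc K j = tailP p K j.
Proof.
move=> jt; rewrite !tailP_cumP ?collapse_sum1 ?p_sum1 ?collapse_cumP_lo //; lia.
Qed.

Lemma gamma_obj_collapse :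
  tailP p K t / (1 - cumP p t.-1 ^+ N) * \sum_(1 <= i < t) zz N p i / tailP p K i
    <= gamma_obj K N pc.
Proof.
have pc_ge0 i : (1 <= i <= K)%N -> 0 <= pc i by move/collapse_gt0/ltW.
have p_ge0 i : (1 <= i <= K)%N -> 0 <= p i by move/p_gt0/ltW.
rewrite /gamma_obj collapse_last.
have -> : zz N pc K = 1 - cumP p t.-1 ^+ N.
  by rewrite /zz collapse_sum1 expr1n collapse_cumP_pred.
apply: ler_wpM2l.
  have T_ge0 : 0 <= tailP p K t by apply/ltW/(tailP_gt0 p_gt0); lia.
  have c_le1 : cumP p t.-1 ^+ N <= 1.
    by rewrite exprn_ile1 ?(cumP_ge0 p_ge0) ?(cumP_le1 p_gt0 p_sum1) //; lia.
  by rewrite divr_ge0 // subr_ge0.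
rewrite -(prednK (_ : 0 < t)%N) ?big_nat_recr /=; try lia.
rewrite [X in _ <= X](big_cat_nat (n := t.-1)) /=; try lia.
apply: lerD.
  apply: ler_sum_nat => i it; rewrite collapse_tailP_lo; last lia.
  by rewrite /zz !collapse_cumP_lo //; lia.
apply: le_trans (ler_sum_nat (F := fun j => zz N pc j / tailP p K t.-1) _) => [|j jK].
  by rewrite -mulr_suml sum_zz ?collapse_cumP_pred ?collapse_cumP_lo //; lia.
apply: ler_wpM2l; first by apply: (zz_ge0 pc_ge0); lia.
rewrite lef_pV2 ?posrE ?(tailP_gt0 collapse_gt0) ?(tailP_gt0 p_gt0); try lia.
by rewrite -collapse_tailP_lo ?(tailP_le pc_ge0); lia.
Qed.

End Collapse.

Lemma ratio_le_of_le_mul (a b g : R) : 0 <= a -> 0 < b -> 0 <= g ->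
  a <= g * b -> a / (a + b) <= g / (1 + g).
Proof.
move=> a_ge0 b_gt0 g_ge0 abg.
rewrite ler_pdivrMr ?ltr_wpDl // mulrAC ler_pdivlMr ?ltr_wpDr //.
by rewrite mulrDr mulr1 mulrDr [g * a]mulrC [in leRHS]addrC lerD2r.
Qed.

Section UpperBound.
Variables (r G : R) (K N : nat) (x p : nat -> R).
Hypothesis N_gt0 : (1 <= N)%N.
Hypothesis p_gt0 : forall i, (1 <= i <= K)%N -> 0 < p i.
Hypothesis p_sum1 : cumP p K = 1.
Hypothesis x_supp : is_support r K x.

Let K_gt0 : (0 < K)%N := cumP_eq1_gt0 p_sum1.
Let p_ge0 i : (1 <= i <= K)%N -> 0 <= p i.
Proof. by move/p_gt0/ltW. Qed.
Let t := reserve_idx K x p.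
Let t_range : (1 <= t <= K)%N := (reserve_idx_spec x p K_gt0).1.
Let t_max := (reserve_idx_spec x p K_gt0).2.

Lemma reserve_tailP_ge : 1 <= r * tailP p K t.
Proof.
have x1_gt0 := x_supp.1.
have x1_le : x 1%N <= x t * tailP p K t.
  by have := t_max (k := 1%N); rewrite [tailP p K 1]p_sum1 mulr1; apply; lia.
have xt_le : x t <= r * x 1%N.
  by apply: le_trans x_supp.2.2; apply: (support_le x_supp); lia.
rewrite -(ler_pM2l x1_gt0) mulr1; apply: le_trans x1_le _.
by rewrite mulrA [x 1%N * r]mulrC ler_wpM2r // ltW // (tailP_gt0 p_gt0).
Qed.

Lemma reserve_head_le :
  \sum_(1 <= i < t) zz N p i * x i <= x t * tailP p K t * \sum_(1 <= i < t) zz N p i / tailP p K i.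
Proof.
rewrite mulr_sumr; apply: ler_sum_nat => i it.
have T_gt0 : 0 < tailP p K i by apply: (tailP_gt0 p_gt0); lia.
rewrite mulrCA ler_wpM2l ?(zz_ge0 p_ge0) ?ler_pdivlMr ?t_max //; lia.
Qed.

Lemma reserve_rest_ge :
  x t * (1 - cumP p t.-1 ^+ N) <= \sum_(t <= i < K.+1) zz N p i * x i.
Proof.
have -> : 1 - cumP p t.-1 ^+ N = \sum_(t <= i < K.+1) zz N p i.
  by rewrite sum_zz /= ?p_sum1 ?expr1n //; lia.
rewrite mulr_sumr; apply: ler_sum_nat => i ti; rewrite mulrC; apply: ler_wpM2l.
  by apply: (zz_ge0 p_ge0); lia.
by apply: (support_le x_supp); lia.
Qed.

Hypothesis G_ge0 : 0 <= G.
Hypothesis G_ub : forall q : nat -> R, (forall i, (1 <= i <= K)%N -> 0 < q i) ->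
  cumP q K = 1 -> 1 <= r * q K -> gamma_obj K N q <= G.

Lemma ELR_le : ELR K N x p <= G / (1 + G).
Proof.
set S := \sum_(1 <= i < t) zz N p i / tailP p K i.
set Z := 1 - cumP p t.-1 ^+ N.
have Z_gt0 : 0 < Z.
  by rewrite subr_gt0 exprn_ilt1 ?(cumP_ge0 p_ge0) ?(cumP_lt1 p_gt0 p_sum1) -?lt0n //; lia.
have xt_gt0 : 0 < x t := support_gt0 x_supp t_range.
have gamma_le : tailP p K t / Z * S <= G.
  have [t1|t2] := leqP t 1; first by rewrite /S big_geq ?mulr0.
  have tK : (t <= K)%N by lia.
  apply: le_trans (gamma_obj_collapse N p_gt0 p_sum1 t2 tK) (G_ub _ _ _).
  - exact: (collapse_gt0 p_gt0 t2 tK).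
  - exact: (collapse_sum1 p_sum1 t2 tK).
  - by rewrite (collapse_last p t2 tK) reserve_tailP_ge.
rewrite /ELR -/t [X in _ / X](big_cat_nat (n := t)) /=; try lia.
apply: ratio_le_of_le_mul => //.
- rewrite big_nat sumr_ge0 // => i it.
  by rewrite mulr_ge0 ?(zz_ge0 p_ge0) ?ltW ?(support_gt0 x_supp); lia.
- by apply: lt_le_trans reserve_rest_ge; rewrite mulr_gt0.
apply: le_trans reserve_head_le _.
have -> : x t * tailP p K t * S = x t * Z * (tailP p K t / Z * S) by field; rewrite lt0r_neq0.
apply: le_trans (ler_wpM2l _ gamma_le) _; first by rewrite mulr_ge0 ?ltW.
by rewrite mulrC ler_wpM2l // reserve_rest_ge.
Qed.

End UpperBound.

Lemma exists_feasible r K : 1 < r -> (1 <= K)%N ->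
  exists q : nat -> R, [/\ forall i, (1 <= i <= K)%N -> 0 < q i, cumP q K = 1 & 1 <= r * q K].
Proof.
move=> r_gt1 K_gt0; have r_gt0 : 0 < r := lt_trans ltr01 r_gt1.
pose a : R := K.-1%:R; pose c := (1 - r^-1) / (a + 1).
have a1_gt0 : 0 < a + 1 by rewrite ltr_wpDl.
have c_gt0 : 0 < c by rewrite divr_gt0 // subr_gt0 invf_lt1.
have last_eq : 1 - a * c = (1 + a / r) / (a + 1) by rewrite /c; field; rewrite !lt0r_neq0.
pose q j := if (j < K)%N then c else 1 - a * c.
exists q; split.
- move=> i _; rewrite /q; case: ifP => // _; rewrite last_eq divr_gt0 //.
  have : 0 <= a / r by rewrite divr_ge0 // ltW.
  lra.
- rewrite -{1}(prednK K_gt0) cumPS prednK // [q K]/q ltnn.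
  rewrite /cumP (eq_big_nat _ _ (F2 := fun=> c)) => [|k kK]; last by rewrite /q ifT //; lia.
  by rewrite sumr_const_nat -mulr_natr subn1 -/a; ring.
- rewrite /q ltnn last_eq mulrA ler_pdivlMr // mul1r mulrDr mulr1 mulrCA divff ?lt0r_neq0 //.
  by rewrite mulr1 addrC lerD2r ltW.
Qed.

Lemma sup_ratio (A E : set R) :
  A !=set0 -> has_ubound A -> (forall a, A a -> 0 <= a) ->
  ubound E (sup A / (1 + sup A)) -> (forall a, A a -> E (a / (1 + a))) ->
  sup E = sup A / (1 + sup A).
Proof.
move=> [a0 Aa0] ubA A_ge0 ubE AE; set s := sup A.
have s_ge0 : 0 <= s := le_trans (A_ge0 _ Aa0) (ub_le_sup ubA Aa0).
have e_le : sup E <= s / (1 + s) by apply: ge_sup ubE; exists (a0 / (1 + a0)); apply: AE.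
apply/le_anti; rewrite e_le /=; set e := sup E.
have e_lt1 : e < 1.
  by apply: le_lt_trans e_le _; rewrite ltr_pdivrMr ?ltr_wpDr // mul1r ltrDr.
have s_le : s * (1 - e) <= e.
  rewrite -ler_pdivlMr ?subr_gt0 //; apply: ge_sup; first by exists a0.
  move=> a Aa; have a_ge0 := A_ge0 a Aa.
  have : a / (1 + a) <= e by apply: ub_le_sup; [exists (s / (1 + s)) | exact: AE].
  by rewrite ler_pdivlMr ?subr_gt0 // ler_pdivrMr ?ltr_wpDr //; nra.
by rewrite ler_pdivrMr ?ltr_wpDr //; nra.
Qed.

End AuctionBounds.

Theorem lemma2 (R : realType) (r : R) (K N : nat) :
  1 < r -> (1 <= K)%N -> (1 <= N)%N ->
  eta_ELR r K N = gamma_sup r K N / (1 + gamma_sup r K N).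
Proof.
move=> r_gt1 K_gt0 N_gt0; have [q [q_gt0 q_sum1 rq]] := exists_feasible r_gt1 K_gt0.
set Gamma := [set g | exists p, is_prob K p /\ 1 <= r * p K /\ g = gamma_obj K N p].
have ubGamma : has_ubound Gamma.
  by exists r => _ [p [[p_gt0 p_sum1] [rp ->]]]; apply: gamma_obj_le.
have G_ub : forall p, (forall i, (1 <= i <= K)%N -> 0 < p i) -> cumP p K = 1 ->
    1 <= r * p K -> gamma_obj K N p <= sup Gamma.
  by move=> p p_gt0 p_sum1 rp; apply: ub_le_sup => //; exists p.
apply: sup_ratio => //; first by exists (gamma_obj K N q); exists q.
- by move=> _ [p [[p_gt0 p_sum1] [_ ->]]]; apply: gamma_obj_ge0.
- move=> _ [x [p [[p_gt0 p_sum1] [x_supp ->]]]]; apply: (ELR_le N_gt0 p_gt0 p_sum1 x_supp) => //.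
  exact: le_trans (gamma_obj_ge0 q_gt0 q_sum1 N_gt0) (G_ub q q_gt0 q_sum1 rq).
- move=> _ [p [[p_gt0 p_sum1] [rp ->]]]; exists (inv_tail p K), p.
  by rewrite ELR_inv_tail //; split; [|split; [exact: inv_tail_support|]].
Qed.
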